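(* Let $\mathcal R=(R,\delta_R)$ be a differential $k$-ring such that the only $k$-algebra automorphism of $R$ commuting with $\delta_R$ is the identity. Let $\mathcal A_1,\mathcal A_2$ be $\mathcal R$-conformal superalgebras such that the canonical maps $R\to\mathrm{Ctd}_k(\mathcal A_i)$, $r\mapsto r_{\mathcal A_i}$, are $k$-algebra isomorphisms for $i=1,2$. Then $\mathcal A_1$ and $\mathcal A_2$ are isomorphic as $k$-conformal superalgebras (by restriction of scalars) if and only if they are isomorphic as $\mathcal R$-conformal superalgebras.
   Context: Let $k$ be a field of characteristic $0$. A differential $k$-ring is $(R,\delta_R)$ with $R$ a commutative unital $k$-algebra and $\delta_R$ a $k$-linear derivation. An $\mathcal R$-conformal superalgebra is a $\mathbb Z/2\mathbb Z$-graded $R$-module $\mathcal A$ with parity-preserving $k$-linear $\partial_{\mathcal A}$ and $k$-bilinear products $a_{(n)}b$ ($n\in\mathbb Z_+$) satisfying: $a_{(n)}b=0$ for $n\gg0$; $(\partial_{\mathcal A}a)_{(n)}b=-na_{(n-1)}b$, $a_{(n)}\partial_{\mathcal A}b=\partial_{\mathcal A}(a_{(n)}b)+na_{(n-1)}b$; $\partial_{\mathcal A}(ra)=r\partial_{\mathcal A}a+\delta_R(r)a$; $a_{(n)}(rb)=r(a_{(n)}b)$, $(ra)_{(n)}b=\sum_j\frac1{j!}\delta_R^j(r)(a_{(n+j)}b)$. Homomorphisms: even $R$-linear maps preserving $n$-products and commuting with $\partial$. A $k$-conformal superalgebra is one over $(k,0)$, and $\mathcal R$-conformal superalgebras are $k$-conformal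 by restriction. $\mathrm{Ctd}_k(\mathcal A)$ is the set of even $k$-linear endomorphisms $\chi$ of $\mathcal A$ with $\chi(a_{(n)}b)=a_{(n)}\chi(b)$ for all $a,b\in\mathcal A$, $n\ge0$; $r_{\mathcal A}$ denotes $a\mapsto ra$. *)

From HB Require Import structures.
From mathcomp Require Import all_boot all_order all_algebra.
Set Implicit Arguments. Unset Strict Implicit. Unset Printing Implicit Defensive.
Import GRing.Theory.
Local Open Scope ring_scope.

Definition is_diff_ring (k : fieldType) (R : comAlgType k) (delta : R -> R) : Prop :=
  (forall (c : k) (x y : R), delta (c *: x + y) = c *: delta x + delta y) /\
  (forall x y : R, delta (x * y) = x * delta y + delta x * y).

Definition rigid (k : fieldType) (R : comAlgType k) (delta : R -> R) : Prop :=
  forall sigma : R -> R,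
    (forall (c : k) (x y : R), sigma (c *: x + y) = c *: sigma x + sigma y) ->
    (forall x y : R, sigma (x * y) = sigma x * sigma y) ->
    sigma 1 = 1 ->
    bijective sigma ->
    (forall x, sigma (delta x) = delta (sigma x)) ->
    forall x, sigma x = x.

Record conf_data (k : fieldType) (R : comAlgType k) (A : lmodType R) := ConfData {
  ev : A -> Prop;
  od : A -> Prop;
  cder : A -> A;
  cprod : nat -> A -> A -> A }.

Definition is_graded (k : fieldType) (R : comAlgType k) (A : lmodType R)
  (e o : A -> Prop) : Prop :=
  [/\ e 0 /\ (forall (r : R) (x y : A), e x -> e y -> e (r *: x + y)),
      o 0 /\ (forall (r : R) (x y : A), o x -> o y -> o (r *: x + y)),
      (forall a : A, exists a0 a1, [/\ e a0, o a1 & a = a0 + a1]) &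
      (forall a : A, e a -> o a -> a = 0)].

(* The k-action on A obtained by restriction of scalars is c.a = (c%:A) *: a. *)

Record is_conformal (k : fieldType) (R : comAlgType k) (delta : R -> R)
  (A : lmodType R) (S : conf_data A) : Prop := IsConformal {
  conf_graded : is_graded (ev S) (od S);
  conf_der_ev : forall a, ev S a -> ev S (cder S a);
  conf_der_od : forall a, od S a -> od S (cder S a);
  conf_der_klin : forall (c : k) (a b : A),
      cder S (c%:A *: a + b) = c%:A *: cder S a + cder S b;
  conf_prod_klin_l : forall n (c : k) (a a' b : A),
      cprod S n (c%:A *: a + a') b = c%:A *: cprod S n a b + cprod S n a' b;
  conf_prod_klin_r : forall n (c : k) (a b b' : A),
      cprod S n a (c%:A *: b + b') = c%:A *: cprod S n a b + cprod S n a b';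
  conf_local : forall a b : A, exists N, forall n, (N <= n)%N -> cprod S n a b = 0;
  (* (da)_(n) b = - n a_(n-1) b  (for n = 0 the right side is 0) *)
  conf_der_l : forall n (a b : A),
      cprod S n (cder S a) b = - (cprod S n.-1 a b *+ n);
  conf_der_r : forall n (a b : A),
      cprod S n a (cder S b) = cder S (cprod S n a b) + cprod S n.-1 a b *+ n;
  conf_der_leibniz : forall (r : R) (a : A),
      cder S (r *: a) = r *: cder S a + delta r *: a;
  conf_prod_Rlin_r : forall n (r : R) (a b : A),
      cprod S n a (r *: b) = r *: cprod S n a b;
  (* (ra)_(n) b = sum_j 1/j! delta^j(r) (a_(n+j) b); the sum is finite by locality,
     and any N beyond which the products a_(n+j) b vanish may be used as bound. *)
  conf_prod_Rlin_l : forall n (r : R) (a b : A) (N : nat),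
      (forall j, (N <= j)%N -> cprod S (n + j) a b = 0) ->
      cprod S n (r *: a) b =
        \sum_(j < N) (((j`!)%:R : k)^-1%:A * iter j delta r) *: cprod S (n + j) a b }.

Definition even_map (k : fieldType) (R : comAlgType k) (A1 A2 : lmodType R)
  (S1 : conf_data A1) (S2 : conf_data A2) (f : A1 -> A2) : Prop :=
  forall a, (ev S1 a -> ev S2 (f a)) /\ (od S1 a -> od S2 (f a)).

Definition is_k_hom (k : fieldType) (R : comAlgType k) (A1 A2 : lmodType R)
  (S1 : conf_data A1) (S2 : conf_data A2) (f : A1 -> A2) : Prop :=
  [/\ even_map S1 S2 f,
      (forall (c : k) (a b : A1), f (c%:A *: a + b) = c%:A *: f a + f b),
      (forall n (a b : A1), f (cprod S1 n a b) = cprod S2 n (f a) (f b)) &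
      (forall a, f (cder S1 a) = cder S2 (f a))].

Definition is_R_hom (k : fieldType) (R : comAlgType k) (A1 A2 : lmodType R)
  (S1 : conf_data A1) (S2 : conf_data A2) (f : A1 -> A2) : Prop :=
  [/\ even_map S1 S2 f,
      (forall (r : R) (a b : A1), f (r *: a + b) = r *: f a + f b),
      (forall n (a b : A1), f (cprod S1 n a b) = cprod S2 n (f a) (f b)) &
      (forall a, f (cder S1 a) = cder S2 (f a))].

Definition k_isomorphic (k : fieldType) (R : comAlgType k) (A1 A2 : lmodType R)
  (S1 : conf_data A1) (S2 : conf_data A2) : Prop :=
  exists (f : A1 -> A2) (g : A2 -> A1),
    [/\ is_k_hom S1 S2 f, is_k_hom S2 S1 g, cancel f g & cancel g f].

Definition R_isomorphic (k : fieldType) (R : comAlgType k) (A1 A2 : lmodType R)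
  (S1 : conf_data A1) (S2 : conf_data A2) : Prop :=
  exists (f : A1 -> A2) (g : A2 -> A1),
    [/\ is_R_hom S1 S2 f, is_R_hom S2 S1 g, cancel f g & cancel g f].

Definition in_Ctd (k : fieldType) (R : comAlgType k) (A : lmodType R)
  (S : conf_data A) (chi : A -> A) : Prop :=
  [/\ even_map S S chi,
      (forall (c : k) (a b : A), chi (c%:A *: a + b) = c%:A *: chi a + chi b) &
      (forall n (a b : A), chi (cprod S n a b) = cprod S n a (chi b))].

(* The canonical map R -> Ctd_k(A), r |-> r_A, is well defined and bijective
   (it is automatically a k-algebra homomorphism). *)
Definition canon_Ctd_iso (k : fieldType) (R : comAlgType k) (A : lmodType R)
  (S : conf_data A) : Prop :=
  [/\ (forall r : R, in_Ctd S (fun a => r *: a)),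
      (forall r s : R, (forall a : A, r *: a = s *: a) -> r = s) &
      (forall chi, in_Ctd S chi -> exists r : R, forall a, chi a = r *: a)].

From HB Require Import structures.
From mathcomp Require Import all_boot all_order all_algebra.
From Stdlib Require Import ClassicalEpsilon.
Set Implicit Arguments. Unset Strict Implicit.
Import GRing.Theory.
Local Open Scope ring_scope.

(* Every R-isomorphism is a k-isomorphism, since k acts on A through c |-> c%:A.
   For the converse, let f : A1 -> A2 be a k-isomorphism with inverse g.
   Conjugation chi |-> f \o chi \o g maps Ctd_k(A1) into Ctd_k(A2); composing
   with the canonical identifications R = Ctd_k(A_i) yields a map sigma : R -> R
   characterised by  f (r *: g a) = sigma r *: a.  We show that sigma is a
   k-algebra endomorphism, that the map built from (g, f) is its inverse, and,
   using the Leibniz rule for the derivations of A1 and A2 together with the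
   fact that f commutes with them, that sigma commutes with delta.  Rigidity of
   (R, delta) forces sigma = id, i.e. f (r *: a) = r *: f a: f is R-linear. *)

Lemma khom_add (k : fieldType) (R : comAlgType k) (A1 A2 : lmodType R)
  (S1 : conf_data A1) (S2 : conf_data A2) (f : A1 -> A2) :
  is_k_hom S1 S2 f -> forall a b, f (a + b) = f a + f b.
Proof. by case=> _ hlin _ _ a b; have := hlin 1 a b; rewrite !scale1r. Qed.

Lemma Rhom_khom (k : fieldType) (R : comAlgType k) (A1 A2 : lmodType R)
  (S1 : conf_data A1) (S2 : conf_data A2) (f : A1 -> A2) :
  is_R_hom S1 S2 f -> is_k_hom S1 S2 f.
Proof. by case=> hev hlin hprod hder; split=> // c; apply: hlin. Qed.

Lemma khom_Rhom (k : fieldType) (R : comAlgType k) (A1 A2 : lmodType R)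
  (S1 : conf_data A1) (S2 : conf_data A2) (f : A1 -> A2) :
  is_k_hom S1 S2 f -> (forall r a, f (r *: a) = r *: f a) -> is_R_hom S1 S2 f.
Proof.
move=> hf hR; have [hev _ hprod hder] := hf.
by split=> // r a b; rewrite (khom_add hf) hR.
Qed.

Lemma Ctd_scalar (k : fieldType) (R : comAlgType k) (A : lmodType R)
  (S : conf_data A) (chi : A -> A) :
  canon_Ctd_iso S -> in_Ctd S chi -> {r : R | forall a, chi a = r *: a}.
Proof.
by case=> _ _ hsurj /hsurj hex; apply: constructive_indefinite_description.
Qed.

Section Transport.

Variables (k : fieldType) (R : comAlgType k) (A1 A2 : lmodType R).
Variables (S1 : conf_data A1) (S2 : conf_data A2).
Hypotheses (C1 : canon_Ctd_iso S1) (C2 : canon_Ctd_iso S2).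
Variables (f : A1 -> A2) (g : A2 -> A1).
Hypotheses (hf : is_k_hom S1 S2 f) (hg : is_k_hom S2 S1 g).
Hypotheses (fK : cancel f g) (gK : cancel g f).

Lemma conj_in_Ctd (chi : A1 -> A1) : in_Ctd S1 chi -> in_Ctd S2 (f \o chi \o g).
Proof.
have [fev flin fprod _] := hf; have [gev glin gprod _] := hg.
case=> chiev chilin chiprod; split=> /=.
- move=> a; have [ga go] := gev a; have [ca co] := chiev (g a).
  have [fa fo] := fev (chi (g a)).
  by split=> [/ga/ca/fa | /go/co/fo].
- by move=> c a b; rewrite glin chilin flin.
- by move=> n a b; rewrite gprod chiprod fprod gK.
Qed.

(* The transported scalar: the element of R acting on A2 as f \o r_A1 \o g. *)
Definition transport (r : R) : R :=
  sval (Ctd_scalar C2 (conj_in_Ctd (let: And3 hr _ _ := C1 in hr r))).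

Lemma transportE r a : f (r *: g a) = transport r *: a.
Proof. exact: (svalP (Ctd_scalar C2 _) a). Qed.

Let scalar_inj (r s : R) : (forall a : A2, r *: a = s *: a) -> r = s.
Proof. by case: C2 => _ inj _; apply: inj. Qed.

Lemma transport_linear (c : k) (x y : R) :
  transport (c *: x + y) = c *: transport x + transport y.
Proof.
have [_ flin _ _] := hf; apply: scalar_inj => a.
rewrite -transportE scalerDl -mulr_algl -scalerA flin !transportE.
by rewrite scalerDl scalerA mulr_algl.
Qed.

Lemma transport_mul (x y : R) : transport (x * y) = transport x * transport y.
Proof. by apply: scalar_inj => a; rewrite -!scalerA -!transportE fK scalerA. Qed.

Lemma transport_one : transport 1 = 1.
Proof. by apply: scalar_inj => a; rewrite -transportE !scale1r gK. Qed.

(* transport commutes with delta: apply f to the Leibniz rule in A1 and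
   compare with the Leibniz rule in A2. *)
Lemma transport_delta (delta : R -> R) :
  is_conformal delta S1 -> is_conformal delta S2 ->
  forall x, transport (delta x) = delta (transport x).
Proof.
move=> H1 H2 x; have [_ _ _ fder] := hf; have [_ _ _ gder] := hg.
apply: scalar_inj => a.
have leib := congr1 f (conf_der_leibniz H1 x (g a)).
rewrite fder transportE (conf_der_leibniz H2) (khom_add hf) -gder transportE in leib.
by rewrite -transportE (addrI _ leib).
Qed.

End Transport.

Lemma transportK (k : fieldType) (R : comAlgType k) (A1 A2 : lmodType R)
  (S1 : conf_data A1) (S2 : conf_data A2)
  (C1 : canon_Ctd_iso S1) (C2 : canon_Ctd_iso S2)
  (f : A1 -> A2) (g : A2 -> A1) (hf : is_k_hom S1 S2 f) (hg : is_k_hom S2 S1 g)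
  (fK : cancel f g) (gK : cancel g f) :
  cancel (transport C1 C2 hf hg gK) (transport C2 C1 hg hf fK).
Proof.
move=> r; have [_ inj1 _] := C1; apply: inj1 => b.
by rewrite -transportE -transportE !fK.
Qed.

Lemma kiso_Rlinear (k : fieldType) (R : comAlgType k) (delta : R -> R)
  (Hrigid : rigid delta) (A1 A2 : lmodType R) (S1 : conf_data A1) (S2 : conf_data A2)
  (H1 : is_conformal delta S1) (H2 : is_conformal delta S2)
  (C1 : canon_Ctd_iso S1) (C2 : canon_Ctd_iso S2)
  (f : A1 -> A2) (g : A2 -> A1) (hf : is_k_hom S1 S2 f) (hg : is_k_hom S2 S1 g)
  (fK : cancel f g) (gK : cancel g f) :
  forall r a, f (r *: a) = r *: f a.
Proof.
have transport_id : forall r, transport C1 C2 hf hg gK r = r.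
  apply: Hrigid.
  - exact: transport_linear.
  - exact: transport_mul.
  - exact: transport_one.
  - by exists (transport C2 C1 hg hf fK); apply: transportK.
  - exact: transport_delta.
by move=> r a; rewrite -[a in LHS]fK (transportE C1 C2 hf hg gK) transport_id.
Qed.

Theorem mainTheorem7 (k : fieldType) (Hchar : [pchar k] =i pred0)
  (R : comAlgType k) (delta : R -> R)
  (Hdiff : is_diff_ring delta) (Hrigid : rigid delta)
  (A1 A2 : lmodType R) (S1 : conf_data A1) (S2 : conf_data A2)
  (H1 : is_conformal delta S1) (H2 : is_conformal delta S2)
  (C1 : canon_Ctd_iso S1) (C2 : canon_Ctd_iso S2) :
  k_isomorphic S1 S2 <-> R_isomorphic S1 S2.
Proof.
split=> -[f [g [hf hg fK gK]]]; exists f, g; split=> //.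
- exact: khom_Rhom hf (kiso_Rlinear Hrigid H1 H2 C1 C2 hf hg fK gK).
- exact: khom_Rhom hg (kiso_Rlinear Hrigid H2 H1 C2 C1 hg hf gK fK).
- exact: Rhom_khom.
- exact: Rhom_khom.
Qed.
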